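(* Let $p$ be a POP of length $k\geq 1$ and let $0\leq i\leq s\leq k$ be such that every label in $$I=\{1,2,\ldots,i\}\cup\{k-s+i+1,\,k-s+i+2,\ldots,k\}$$ is isolated in $p$ (incomparable to every other label). Let $p_1$ be the POP of length $k-s$ obtained from $p$ by deleting the labels in $I$ and relabeling the remaining labels $i+1,\ldots,k-s+i$ as $1,\ldots,k-s$ in an order-preserving way (i.e. label $j$ becomes $j-i$), keeping the order relations among them. Let $a(n)=|S_n(p)|$ and $b(n)=|S_n(p_1)|$. Then $a(n)=n!$ for $n<k$ and $$a(n)=\frac{n!}{(n-s)!}\,b(n-s)\quad\text{for } n\geq k.$$
   Context: An $n$-permutation is a word $\pi=\pi_1\cdots\pi_n$ containing each of $1,\ldots,n$ exactly once; $S_n$ is the set of $n$-permutations ($S_0$ consists of the empty permutation). A partially ordered pattern (POP) $p$ of length $k$ is a partial order $\prec$ on the label set $\{1,\ldots,k\}$ (for $k=0$ it is the empty pattern, contained in every permutation). An $n$-permutation $\pi$ contains $p$ if there are indices $1\leq i_1<\cdots<i_k\leq n$ such that $\pi_{i_j}<\pi_{i_m}$ whenever $j\prec m$ (no condition between incomparable labels); otherwise $\pi$ avoids $p$. $S_n(p)$ denotes the set of $n$-permutations avoiding $p$. *)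

From mathcomp Require Import all_boot all_order all_fingroup.
Set Implicit Arguments. Unset Strict Implicit. Unset Printing Implicit Defensive.

(* A POP of length k: a strict partial order on the label set 'I_k
   (labels 1..k of the paper are 0..k-1 here). [p a b] means a ≺ b. *)
Definition is_pop (k : nat) (p : rel 'I_k) : Prop :=
  irreflexive p /\ transitive p.

Definition contains (k n : nat) (p : rel 'I_k) (sigma : 'S_n) : bool :=
  [exists f : {ffun 'I_k -> 'I_n},
    [forall a : 'I_k, forall b : 'I_k, (a < b) ==> (f a < f b)] &&
    [forall a : 'I_k, forall b : 'I_k, p a b ==> (sigma (f a) < sigma (f b))]].

Definition avoids (k n : nat) (p : rel 'I_k) (sigma : 'S_n) : bool :=
  ~~ contains p sigma.

Definition num_avoid (k : nat) (p : rel 'I_k) (n : nat) : nat :=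
  #|[set sigma : 'S_n | avoids p sigma]|.

Definition isolated (k : nat) (p : rel 'I_k) (l : 'I_k) : Prop :=
  forall j : 'I_k, j != l -> ~~ p l j /\ ~~ p j l.

Definition nat_rel (k : nat) (p : rel 'I_k) : rel nat :=
  fun x y => match insub x, insub y with
             | Some a, Some b => p a b
             | _, _ => false
             end.

(* The POP of length k - s obtained by deleting labels 0..i-1 and
   k-s+i..k-1 and relabelling label j (i <= j < k-s+i) as j - i. *)
Definition restrict_pop (k : nat) (p : rel 'I_k) (i s : nat) : rel 'I_(k - s) :=
  fun a b => nat_rel p (val a + i) (val b + i).
Arguments restrict_pop {k} p i s.

From mathcomp Require Import all_boot all_order all_fingroup zify.
Set Implicit Arguments. Unset Strict Implicit. Unset Printing Implicit Defensive.

(* An isolated label imposes only a position, never a value constraint.  If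
   the first label of the pattern is isolated, a permutation of length n+1
   written as [lift_perm 0 j t] (first entry j, the rest order-isomorphic to
   t) contains the pattern iff t contains the pattern with that label
   deleted: an occurrence can always use the first entry for the isolated
   label.  The same holds for an isolated last label and [lift_perm max j t].
   Since (j, t) |-> lift_perm i0 j t is a bijection 'I_(n+1) * 'S_n -> 'S_(n+1),
   each deletion multiplies the number of avoiders by n+1.  Deleting the
   i isolated leading and the s-i isolated trailing labels one at a time gives
   |S_n(p)| = n^_s * |S_(n-s)(p_1)| = n!/(n-s)! * |S_(n-s)(p_1)| for n >= k.
   For n < k nothing contains a pattern of length k (pigeonhole).
   To let the induction peel labels freely, patterns are handled as relations
   on nat restricted to an initial segment ([pop_of]), and permutations as
   functions on nat ([perm_nat]). *)

Definition pop_of (k : nat) (R : rel nat) : rel 'I_k := fun a b => R a b.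
Arguments pop_of k R : clear implicits.

Definition nat_isolated (k : nat) (R : rel nat) (l : nat) : Prop :=
  forall y, y < k -> ~~ R l y && ~~ R y l.

Definition perm_nat n (s : 'S_n) (x : nat) : nat :=
  if (insub x : option 'I_n) is Some a then val (s a) else 0.

Lemma perm_natE n (s : 'S_n) (a : 'I_n) : perm_nat s a = s a.
Proof. by rewrite /perm_nat valK. Qed.

Lemma insub_ord k x (xk : x < k) : (insub x : option 'I_k) = Some (Ordinal xk).
Proof. by rewrite insubT. Qed.

Lemma ltn_bump2 h x y : (bump h x < bump h y) = (x < y).
Proof. by rewrite !ltnNge leq_bump2. Qed.

Lemma perm_nat_lift n (i j : 'I_n.+1) (t : 'S_n) x : x < n ->
  perm_nat (lift_perm i j t) (bump i x) = bump j (perm_nat t x).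
Proof.
move=> xn; have -> : bump i x = lift i (Ordinal xn) by [].
by rewrite perm_natE lift_perm_lift /= -(perm_natE t (Ordinal xn)).
Qed.

Lemma perm_nat_lift_id n (i j : 'I_n.+1) (t : 'S_n) :
  perm_nat (lift_perm i j t) i = j.
Proof. by rewrite perm_natE lift_perm_id. Qed.

Lemma containsP k n (R : rel nat) (s : 'S_n) :
  reflect (exists h : nat -> nat,
    [/\ (forall a b, a < b -> b < k -> h a < h b),
        (forall a, a < k -> h a < n) &
        (forall a b, a < k -> b < k -> R a b -> perm_nat s (h a) < perm_nat s (h b))])
  (contains (pop_of k R) s).
Proof.
apply: (iffP existsP).
- move=> [f /andP[/forallP incr /forallP resp]].
  exists (fun x => if (insub x : option 'I_k) is Some a then val (f a) else 0).
  split.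
  + move=> a b ab bk; have ak := ltn_trans ab bk.
    rewrite (insub_ord ak) (insub_ord bk).
    by move/forallP/(_ (Ordinal bk))/implyP: (incr (Ordinal ak)); apply.
  + by move=> a ak; rewrite (insub_ord ak) ltn_ord.
  + move=> a b ak bk Rab; rewrite (insub_ord ak) (insub_ord bk) !perm_natE.
    by move/forallP/(_ (Ordinal bk))/implyP: (resp (Ordinal ak)); apply.
- move=> [h [incr bound resp]].
  exists [ffun a : 'I_k => Ordinal (bound _ (ltn_ord a))].
  apply/andP; split; apply/forallP=> a; apply/forallP=> b; apply/implyP=> ab;
    rewrite !ffunE /=; first exact: incr.
  by rewrite -!perm_natE; apply: resp.
Qed.

Lemma eq_num_avoid k (p q : rel 'I_k) n : p =2 q -> num_avoid p n = num_avoid q n.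
Proof.
move=> epq; apply: eq_card => s; rewrite !inE /avoids /contains.
congr (~~ _); apply: eq_existsb => f; congr (_ && _).
by apply: eq_forallb => a; apply: eq_forallb => b; rewrite epq.
Qed.

Lemma contains_length k n (p : rel 'I_k) (s : 'S_n) : contains p s -> k <= n.
Proof.
move=> /existsP[f /andP[/forallP incr _]].
have finj : injective f.
  move=> a b fab; apply/eqP; case: (ltngtP a b) => [ab|ba|/val_inj -> //].
  - by move/forallP/(_ b)/implyP/(_ ab): (incr a); rewrite fab ltnn.
  - by move/forallP/(_ a)/implyP/(_ ba): (incr b); rewrite fab ltnn.
by have := leq_card f finj; rewrite !card_ord.
Qed.

Lemma card_lift_perm n (i0 : 'I_n.+1) (A : pred 'S_n.+1) (B : pred 'S_n) :
  (forall j t, A (lift_perm i0 j t) = B t) ->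
  #|[set s | A s]| = n.+1 * #|[set t | B t]|.
Proof.
move=> AB.
pose F (x : 'I_n.+1 * 'S_n) := lift_perm i0 x.1 x.2.
have Finj : injective F.
  move=> [j1 t1] [j2 t2]; rewrite /F /= => E.
  have ej : j1 = j2 by rewrite -(lift_perm_id i0 j1 t1) E lift_perm_id.
  subst j2; congr pair; apply/permP=> m; apply: (@lift_inj _ j1).
  by rewrite -!(lift_perm_lift i0) E.
have Fonto s : s \in codom F.
  by apply: inj_card_onto => //; rewrite card_prod card_ord !card_Sn factS.
have -> : [set s | A s] = F @: setX [set: 'I_n.+1] [set t | B t].
  apply/setP => s; rewrite inE; apply/idP/imsetP.
  - by have /codomP[[j t] ->] := Fonto s; rewrite /F AB => Bt; exists (j, t);
      rewrite ?inE.
  - by move=> [[j t]]; rewrite !inE => /= Bt ->; rewrite /F AB.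
by rewrite (card_imset _ Finj) cardsX cardsT card_ord.
Qed.

(* An isolated first label can always be matched by the first entry. *)
Lemma contains_lift_first k n (R : rel nat) (j : 'I_n.+1) (t : 'S_n) :
  nat_isolated k.+1 R 0 ->
  contains (pop_of k.+1 R) (lift_perm ord0 j t) =
  contains (pop_of k (fun x y => R x.+1 y.+1)) t.
Proof.
move=> iso0; have perm_natS x : x < n ->
    perm_nat (lift_perm ord0 j t) x.+1 = bump j (perm_nat t x).
  exact: perm_nat_lift.
apply/containsP/containsP=> -[h [incr bound resp]].
- have pos a : a < k -> 0 < h a.+1.
    by move=> ak; apply: leq_ltn_trans (incr 0 a.+1 erefl ak).
  have hS a : a < k -> h a.+1 = (h a.+1).-1.+1 by move/pos/prednK.
  have bound' a : a < k -> (h a.+1).-1 < n.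
    by move=> ak; rewrite -ltnS -hS //; apply: bound.
  exists (fun x => (h x.+1).-1); split => [a b ab bk | // | a b ak bk Rab].
  + have ak := ltn_trans ab bk.
    by rewrite -ltnS -(hS a) // -(hS b) //; apply: incr.
  + by have := resp a.+1 b.+1 ak bk Rab; rewrite (hS a) // (hS b) // !perm_natS
      ?bound' // ltn_bump2.
- exists (fun x => if x is x'.+1 then (h x').+1 else 0).
  split => [[|a] [|b] // ab bk | [|a] // ak | [|a] [|b] ak bk].
  + by rewrite ltnS; apply: incr.
  + by rewrite ltnS; apply: bound.
  + by have /andP[/negbTE -> _] := iso0 0 ak.
  + by have /andP[/negbTE -> _] := iso0 _ bk.
  + by have /andP[_ /negbTE ->] := iso0 _ ak.
  + by move=> Rab; rewrite !perm_natS ?bound // ltn_bump2; apply: resp.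
Qed.

(* An isolated last label can always be matched by the last entry. *)
Lemma contains_lift_last k n (R : rel nat) (j : 'I_n.+1) (t : 'S_n) :
  nat_isolated k.+1 R k ->
  contains (pop_of k.+1 R) (lift_perm ord_max j t) = contains (pop_of k R) t.
Proof.
move=> isok; have perm_natB x : x < n ->
    perm_nat (lift_perm ord_max j t) x = bump j (perm_nat t x).
  move=> xn; have {1}-> : x = bump (@ord_max n) x by rewrite /bump /= leqNgt xn.
  exact: perm_nat_lift.
apply/containsP/containsP=> -[h [incr bound resp]].
- have bound' a : a < k -> h a < n.
    by move=> ak; rewrite -ltnS; apply: leq_trans (incr a k ak _) (bound k _).
  exists h; split => [a b ab bk | // | a b ak bk Rab].
  + exact: incr _ _ ab (ltnW bk).
  + by have := resp _ _ (ltnW ak) (ltnW bk) Rab; rewrite !perm_natB ?bound'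
      // ltn_bump2.
- exists (fun x => if x < k then h x else n).
  split => [a b ab bk | a ak | a b ak bk].
  + case: (ltnP a k) => a_k; case: (ltnP b k) => b_k;
      [exact: incr | exact: bound | lia | lia].
  + by case: (ltnP a k) => // a_k; apply/ltnW/bound.
  + case: (ltnP a k) => a_k; case: (ltnP b k) => b_k.
    * by move=> Rab; rewrite !perm_natB ?bound // ltn_bump2; apply: resp.
    * have -> : b = k by lia.
      by have /andP[_ /negbTE ->] := isok _ ak.
    * have -> : a = k by lia.
      by have /andP[/negbTE -> _] := isok _ bk.
    * have -> : a = k by lia.
      by have /andP[/negbTE -> _] := isok _ bk.
Qed.

Lemma num_avoid_strip_first k n (R : rel nat) :
  nat_isolated k.+1 R 0 ->
  num_avoid (pop_of k.+1 R) n.+1 =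
  n.+1 * num_avoid (pop_of k (fun x y => R x.+1 y.+1)) n.
Proof.
move=> iso0; apply: (card_lift_perm (i0 := ord0)) => j t.
by rewrite /avoids contains_lift_first.
Qed.

Lemma num_avoid_strip_last k n (R : rel nat) :
  nat_isolated k.+1 R k ->
  num_avoid (pop_of k.+1 R) n.+1 = n.+1 * num_avoid (pop_of k R) n.
Proof.
move=> isok; apply: (card_lift_perm (i0 := ord_max)) => j t.
by rewrite /avoids contains_lift_last.
Qed.

Lemma num_avoid_strip s i k (R : rel nat) n : i <= s -> s <= k -> k <= n ->
  (forall l, l < k -> (l < i) || (k - s + i <= l) -> nat_isolated k R l) ->
  num_avoid (pop_of k R) n =
  n ^_ s * num_avoid (pop_of (k - s) (fun x y => R (x + i) (y + i))) (n - s).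
Proof.
elim: s i k R n => [|s IH] i k R n le_is le_sk le_kn iso.
  move: le_is; rewrite leqn0 => /eqP ->; rewrite ffactn0 mul1n !subn0.
  by apply: eq_num_avoid => a b; rewrite /pop_of !addn0.
case: k le_sk le_kn iso => [|k] // le_sk; case: n => [|n] // le_kn iso.
rewrite !subSS ffactSS -mulnA.
case: i le_is iso => [|i] le_is iso.
- rewrite num_avoid_strip_last; last by apply: iso; lia.
  by congr (_ * _); apply: IH => // l lk ll y yk; apply: iso; lia.
- rewrite num_avoid_strip_first; last by apply: iso.
  rewrite (IH i) //; last by move=> l lk ll y yk; apply: iso; lia.
  by congr (_ * (_ * _)); apply: eq_num_avoid => a b; rewrite /pop_of !addnS.
Qed.

Lemma pop_of_nat_rel k (p : rel 'I_k) : pop_of k (nat_rel p) =2 p.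
Proof. by move=> a b; rewrite /pop_of /nat_rel !valK. Qed.

(* Isolation transfers to the nat presentation (p is irreflexive, so the
   label is also unrelated to itself). *)
Lemma nat_rel_isolated k (p : rel 'I_k) (l : 'I_k) :
  irreflexive p -> isolated p l -> nat_isolated k (nat_rel p) l.
Proof.
move=> irr iso y yk; rewrite /nat_rel valK (insub_ord yk).
have [-> | ne] := eqVneq (Ordinal yk) l; first by rewrite irr.
by have [-> ->] := iso _ ne.
Qed.

Theorem theorem2p4 (k : nat) (p : rel 'I_k) (i s : nat) :
  1 <= k -> is_pop p -> i <= s -> s <= k ->
  (forall l : 'I_k, (val l < i) || (k - s + i <= val l) -> isolated p l) ->
  (forall n, n < k -> num_avoid p n = n`!) /\
  (forall n, k <= n ->
     num_avoid p n = n`! %/ (n - s)`! * num_avoid (restrict_pop p i s) (n - s)).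
Proof.
move=> _ [irr _] le_is le_sk iso; split => n nk.
  rewrite /num_avoid -card_Sn; apply: eq_card => sg; rewrite !inE /avoids.
  by apply/negP => /contains_length; rewrite leqNgt nk.
rewrite -(ffact_factd (leq_trans le_sk nk)) -(eq_num_avoid _ (pop_of_nat_rel p)).
rewrite (@num_avoid_strip s i) // => l lk ll.
by have := nat_rel_isolated irr (iso (Ordinal lk) ll).
Qed.
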